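(* Let $\mathcal{U}$ be a universe of $n$ element types with frequencies $f:\mathcal{U}\to\{1,2,\dots\}$ and total $N=\sum_{e\in\mathcal{U}}f(e)$. Let $\mathcal{G}=\{\mathbf{g}_1,\dots,\mathbf{g}_\ell\}$, $\ell\ge 2$, be a partition of $\mathcal{U}$ into nonempty groups with $n_j=|\mathbf{g}_j|$ and $N_j=\sum_{e\in\mathbf{g}_j}f(e)$. Let $w$ be a positive integer such that each $w_j=\frac{n_j}{n}w$ is a positive integer. Consider (i) the standard one-row Count-Min sketch (CM), in which each element type is hashed independently and uniformly at random into $w$ bins, and (ii) the one-row Fair-Count-Min sketch (FCM), in which the $w$ bins are split into disjoint blocks of sizes $w_1,\dots,w_\ell$ and each element type of $\mathbf{g}_j$ is hashed independently and uniformly at random into block $j$. Then $\mathcal{L}_{FCM}<\mathcal{L}_{CM}$, i.e. the price of fairness $\mathcal{L}_{FCM}-\mathcal{L}_{CM}$ is negative.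
   Context: In a one-row sketch with hash $\mathsf{h}$, the estimate of $e$ is $\hat f(e)=\sum_{e':\mathsf{h}(e')=\mathsf{h}(e)}f(e')$ and its additive error is $\varepsilon_A(e)=\hat f(e)-f(e)=\sum_{e'\neq e:\mathsf{h}(e')=\mathsf{h}(e)}f(e')$. The total expected additive error of a sketch is $\mathcal{L}=\sum_{e\in\mathcal{U}}\mathbb{E}[\varepsilon_A(e)]$, expectation over the random hash. The price of fairness is $\mathcal{L}_{FCM}-\mathcal{L}_{CM}$. *)

From mathcomp Require Import all_boot all_order all_algebra.
Set Implicit Arguments. Unset Strict Implicit. Unset Printing Implicit Defensive.
Import Order.TTheory GRing.Theory Num.Theory.
Local Open Scope ring_scope.

(* A hash function is an element of {ffun U -> 'I_w}; a (uniformly random)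
   hash family is a finite set H of such functions, drawn uniformly. *)

Definition add_err (U : finType) (w : nat) (f : U -> nat)
  (h : {ffun U -> 'I_w}) (e : U) : rat :=
  (\sum_(e' : U | (e' != e) && (h e' == h e)) f e')%N%:R.

Definition exp_err (U : finType) (w : nat) (f : U -> nat)
  (H : {set {ffun U -> 'I_w}}) (e : U) : rat :=
  (#|H|%:R)^-1 * \sum_(h in H) add_err f h e.

Definition total_loss (U : finType) (w : nat) (f : U -> nat)
  (H : {set {ffun U -> 'I_w}}) : rat :=
  \sum_(e : U) exp_err f H e.

(* Count-Min: every element hashed independently and uniformly into all w bins,
   i.e. h uniform over all functions U -> 'I_w *)
Definition CM_hashes (U : finType) (w : nat) : {set {ffun U -> 'I_w}} :=
  [set: {ffun U -> 'I_w}].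

(* group partition given by a labelling g : U -> 'I_l; block of group j is
   the bin interval [offset j, offset j + wj j), offset j = sum_{k<j} wj k *)
Definition block_offset (l : nat) (wj : 'I_l -> nat) (j : 'I_l) : nat :=
  (\sum_(k < l | (k < j)%N) wj k)%N.

Definition in_block (l w : nat) (wj : 'I_l -> nat) (j : 'I_l) (b : 'I_w) : bool :=
  (block_offset wj j <= b < block_offset wj j + wj j)%N.

Definition FCM_hashes (U : finType) (l w : nat) (g : U -> 'I_l)
  (wj : 'I_l -> nat) : {set {ffun U -> 'I_w}} :=
  [set h : {ffun U -> 'I_w} | [forall e : U, in_block wj (g e) (h e)]].

Definition group_size (U : finType) (l : nat) (g : U -> 'I_l) (j : 'I_l) : nat :=
  #|[set e : U | g e == j]|.

From mathcomp Require Import all_boot all_order all_algebra.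
From mathcomp Require Import zify.
Set Implicit Arguments. Unset Strict Implicit. Unset Printing Implicit Defensive.
Import Order.TTheory GRing.Theory Num.Theory.
Local Open Scope ring_scope.

(* Both sketches draw their hash function uniformly from a product family
   {h | h x \in Q x for every x}.  In such a family two distinct elements with
   the same range Q collide with probability 1/|Q|, and never when their ranges
   are disjoint.  Exchanging the two sums in the total error therefore gives
   L_CM = sum_e f(e) (n - 1) / w and L_FCM = sum_e f(e) (n_j - 1) / w_j, where j
   is the group of e.  Since w_j = n_j w / n, the termwise inequality
   (n_j - 1) / w_j < (n - 1) / w amounts to n_j < n, which holds because there
   are at least two nonempty groups. *)

Lemma card_in_bij (T T' : finType) (A : {set T}) (B : {set T'})
    (f : T -> T') (g : T' -> T) :
  {in A, cancel f g} -> {in B, cancel g f} ->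
  {in A, forall x, f x \in B} -> {in B, forall y, g y \in A} -> #|A| = #|B|.
Proof.
move=> fK gK fA gB; rewrite -(card_in_imset (can_in_inj fK)).
suff -> : f @: A = B by [].
apply/setP => y; apply/imsetP/idP => [[x xA ->] | yB]; first exact: fA.
by exists (g y); rewrite ?gK ?gB.
Qed.

Lemma card_ord_interval (w m k : nat) : (m + k <= w)%N ->
  #|[pred c : 'I_w | (m <= c < m + k)%N]| = k.
Proof.
elim: k => [|k IHk] mkw.
  by apply: eq_card0 => c; rewrite !inE addn0 ltnNge andbN.
have mk_lt_w : (m + k < w)%N by rewrite addnS in mkw.
rewrite (cardD1 (Ordinal mk_lt_w)) inE /= leq_addr addnS ltnSn add1n.
rewrite -[in RHS](IHk (ltnW mk_lt_w)).
congr _.+1; apply: eq_card => c; rewrite !inE -val_eqE /= ltnS.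
by case: ltngtP; rewrite ?andbF.
Qed.

Definition coll_prob (U : finType) (w : nat) (H : {set {ffun U -> 'I_w}})
    (a b : U) : rat :=
  #|[set h in H | h a == h b]|%:R / #|H|%:R.

Section ExpectedError.
Variables (U : finType) (w : nat) (f : U -> nat) (H : {set {ffun U -> 'I_w}}).

Lemma exp_err_coll_prob e :
  exp_err f H e = \sum_(e' | e' != e) (f e')%:R * coll_prob H e' e.
Proof.
rewrite /exp_err /add_err.
under eq_bigr => h _ do rewrite natr_sum big_mkcondr /=.
rewrite exchange_big mulr_sumr; apply: eq_bigr => e' _.
rewrite -big_mkcondr sumr_const /coll_prob.
have -> : #|[pred h | (h \in H) && (h e' == h e)]|
         = #|[set h in H | h e' == h e]|.
  by apply: eq_card => h; rewrite !inE.
by rewrite -(mulr_natr (f e')%:R) mulrCA [_^-1 * _]mulrC.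
Qed.

Lemma total_loss_coll_prob :
  total_loss f H = \sum_e' (f e')%:R * \sum_(e | e != e') coll_prob H e' e.
Proof.
rewrite /total_loss; under eq_bigr do rewrite exp_err_coll_prob big_mkcond.
rewrite exchange_big; apply: eq_bigr => e' _.
rewrite mulr_sumr [RHS]big_mkcond; apply: eq_bigr => e _.
by rewrite eq_sym; case: ifP.
Qed.

End ExpectedError.

Section ProductHashFamily.
Variables (U : finType) (w : nat) (Q : U -> pred 'I_w).

Definition prod_hashes : {set {ffun U -> 'I_w}} :=
  [set h : {ffun U -> 'I_w} | [forall x, Q x (h x)]].

Definition ffun_upd (h : {ffun U -> 'I_w}) b c : {ffun U -> 'I_w} :=
  [ffun x => if x == b then c else h x].

Lemma ffun_upd_upd h b c d : ffun_upd (ffun_upd h b c) b d = ffun_upd h b d.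
Proof. by apply/ffunP => x; rewrite !ffunE; case: eqP. Qed.

Lemma ffun_upd_id h b : ffun_upd h b (h b) = h.
Proof. by apply/ffunP => x; rewrite !ffunE; case: eqP => // ->. Qed.

Lemma prod_hashesP h x : h \in prod_hashes -> Q x (h x).
Proof. by rewrite inE => /forallP. Qed.

Lemma ffun_upd_prod h b c :
  h \in prod_hashes -> Q b c -> ffun_upd h b c \in prod_hashes.
Proof.
rewrite !inE => /forallP hQ Qc; apply/forallP => x; rewrite ffunE.
by case: eqP => [-> | _]; [exact: Qc | exact: hQ].
Qed.

(* Each fibre {h | h b = c} is in bijection with the collision set: overwrite
   [h b] by [h a], and back by [c]. *)
Lemma card_prod_hashes_coll a b : a != b -> {subset Q a <= Q b} ->
  (#|[set h in prod_hashes | h a == h b]| * #|Q b| = #|prod_hashes|)%N.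
Proof.
move=> ab Qab; set C := [set h in prod_hashes | h a == h b].
have fibre c : Q b c -> #|[set h in prod_hashes | h b == c]| = #|C|.
  move=> Qc; apply: (@card_in_bij _ _ _ _ (fun h => ffun_upd h b (h a))
                                        (fun h => ffun_upd h b c)).
  - by move=> h /setIdP [_ /eqP <-]; rewrite ffun_upd_upd ffun_upd_id.
  - move=> h /setIdP [_ /eqP hab].
    by rewrite ffun_upd_upd ffunE (negbTE ab) hab ffun_upd_id.
  - move=> h /setIdP [hH _]; apply/setIdP; split.
      exact/ffun_upd_prod/Qab/prod_hashesP.
    by rewrite !ffunE (negbTE ab) eqxx.
  - move=> h /setIdP [hH _]; apply/setIdP; split; first exact: ffun_upd_prod.
    by rewrite ffunE eqxx.
rewrite mulnC -sum_nat_const -[#|prod_hashes|]sum1_card.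
rewrite (partition_big (fun h : {ffun U -> 'I_w} => h b) (Q b)) /=; last first.
  by move=> h /prod_hashesP.
apply: eq_bigr => c Qc; rewrite -(fibre c Qc) -sum1_card.
by apply: eq_bigl => h; rewrite !inE.
Qed.

Lemma coll_prob_prod a b : a != b -> {subset Q a <= Q b} ->
  (0 < #|prod_hashes|)%N -> coll_prob prod_hashes a b = (#|Q b|%:R)^-1.
Proof.
move=> ab Qab; rewrite /coll_prob -(card_prod_hashes_coll ab Qab).
rewrite muln_gt0 => /andP [C0 _].
by rewrite natrM invfM mulrA divff ?mul1r // pnatr_eq0 -lt0n.
Qed.

Lemma coll_prob_disjoint a b : (forall c, Q a c -> Q b c -> False) ->
  coll_prob prod_hashes a b = 0.
Proof.
move=> disj; rewrite /coll_prob.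
suff -> : [set h in prod_hashes | h a == h b] = set0 by rewrite cards0 mul0r.
apply/setP => h; rewrite !inE; apply/negP => /andP [/forallP hQ /eqP hab].
by apply: (disj (h a)) => //; rewrite hab.
Qed.

End ProductHashFamily.

Lemma CM_hashes_prod (U : finType) (w : nat) :
  CM_hashes U w = prod_hashes (fun _ : U => @predT 'I_w).
Proof. by apply/setP => h; rewrite !inE; apply/esym/forallP. Qed.

Lemma coll_prob_CM (U : finType) (w : nat) (a b : U) : (0 < w)%N -> a != b ->
  coll_prob (CM_hashes U w) a b = (w%:R)^-1.
Proof.
move=> w0 ab; rewrite CM_hashes_prod coll_prob_prod ?card_ord //.
by rewrite -CM_hashes_prod cardsT card_ffun card_ord expn_gt0 w0.
Qed.

Lemma sum_coll_prob_CM (U : finType) (w : nat) (a : U) : (0 < w)%N ->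
  \sum_(b | b != a) coll_prob (CM_hashes U w) a b = (w%:R)^-1 *+ #|U|.-1.
Proof.
move=> w0; rewrite -(cardC1 a) -sumr_const.
by apply: eq_big => [b | b ba]; rewrite ?inE // coll_prob_CM // eq_sym.
Qed.

Section Blocks.
Variables (l w : nat) (wj : 'I_l -> nat).
Local Notation off := (block_offset wj).

Lemma block_offset_addE j : (off j + wj j = \sum_(k < l | (k <= j)%N) wj k)%N.
Proof.
rewrite /block_offset [RHS](bigD1 j) //= addnC; congr (_ + _).
by apply: eq_bigl => k; rewrite ltn_neqAle andbC.
Qed.

Lemma block_offset_mono (j k : 'I_l) : (j < k)%N -> (off j + wj j <= off k)%N.
Proof.
move=> jk; rewrite block_offset_addE /block_offset.
rewrite [leqLHS]big_mkcond [leqRHS]big_mkcond.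
by apply: leq_sum => i _; case: ifP => //= ij; rewrite (leq_ltn_trans ij jk).
Qed.

Lemma block_offset_add_le j : (off j + wj j <= \sum_k wj k)%N.
Proof.
rewrite block_offset_addE [leqLHS]big_mkcond.
by apply: leq_sum => i _; case: ifP.
Qed.

Lemma in_block_inj j k (c : 'I_w) : in_block wj j c -> in_block wj k c -> j = k.
Proof.
move=> /andP [jc cj] /andP [kc ck]; apply/val_inj/eqP.
case: ltngtP => // [jk | kj].
- by have := block_offset_mono jk; rewrite leqNgt (leq_ltn_trans kc cj).
- by have := block_offset_mono kj; rewrite leqNgt (leq_ltn_trans jc ck).
Qed.

Lemma card_in_block j : (\sum_k wj k <= w)%N -> #|@in_block l w wj j| = wj j.
Proof.
move=> sum_le; apply: card_ord_interval.
exact: leq_trans (block_offset_add_le j) sum_le.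
Qed.

End Blocks.

Section FairCountMin.
Variables (U : finType) (l : nat) (g : U -> 'I_l) (w : nat) (wj : 'I_l -> nat).
Hypothesis U_gt0 : (0 < #|U|)%N.
Hypothesis wj_gt0 : forall j, (0 < wj j)%N.
Hypothesis wjE : forall j, (wj j * #|U| = group_size g j * w)%N.

Lemma sum_group_size : (\sum_j group_size g j)%N = #|U|.
Proof.
rewrite -[RHS]sum1_card (partition_big g xpredT) //=; apply: eq_bigr => j _.
by rewrite sum1_card; apply: eq_card => e; rewrite inE.
Qed.

Lemma sum_wj : (\sum_j wj j)%N = w.
Proof.
apply/eqP; rewrite -(eqn_pmul2r U_gt0) big_distrl /=.
by under eq_bigr do rewrite wjE; rewrite -big_distrl /= sum_group_size mulnC.
Qed.

Lemma FCM_hashes_prod :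
  FCM_hashes w g wj = prod_hashes (fun e => in_block wj (g e)).
Proof. by []. Qed.

Lemma FCM_hashes_gt0 : (0 < #|FCM_hashes w g wj|)%N.
Proof.
have off_lt j : (block_offset wj j < w)%N.
  rewrite -sum_wj; apply: leq_trans (block_offset_add_le wj j).
  by rewrite -addn1 leq_add2l wj_gt0.
apply/card_gt0P; exists [ffun e => Ordinal (off_lt (g e))].
rewrite inE; apply/forallP => e.
by rewrite ffunE /in_block /= leqnn -addn1 leq_add2l wj_gt0.
Qed.

Lemma coll_prob_FCM a b : a != b ->
  coll_prob (FCM_hashes w g wj) a b
    = if g a == g b then (wj (g b))%:R^-1 else 0.
Proof.
move=> ab; case: eqP => [gab | gab].
- rewrite FCM_hashes_prod coll_prob_prod -?FCM_hashes_prod ?FCM_hashes_gt0 //.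
    by rewrite card_in_block ?sum_wj.
  by rewrite gab.
- rewrite FCM_hashes_prod; apply: coll_prob_disjoint => c.
  by move=> /in_block_inj eq_ab /eq_ab.
Qed.

Lemma sum_coll_prob_FCM a :
  \sum_(b | b != a) coll_prob (FCM_hashes w g wj) a b
    = (wj (g a))%:R^-1 *+ (group_size g (g a)).-1.
Proof.
have collE b : b != a -> coll_prob (FCM_hashes w g wj) a b
                          = if g b == g a then (wj (g a))%:R^-1 else 0.
  by move=> ba; rewrite coll_prob_FCM 1?eq_sym // eq_sym; case: eqP => // ->.
rewrite (eq_bigr _ collE) -big_mkcondr sumr_const.
rewrite /group_size (cardsD1 a) inE eqxx add1n /=.
by congr (_ *+ _); apply: eq_card => b; rewrite !inE.
Qed.

End FairCountMin.

Lemma group_size_gt0 (U : finType) (l : nat) (g : U -> 'I_l) (e : U) :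
  (0 < group_size g (g e))%N.
Proof. by apply/card_gt0P; exists e; rewrite inE. Qed.

Lemma group_size_lt (U : finType) (l : nat) (g : U -> 'I_l) (j : 'I_l) :
  (2 <= l)%N -> (forall k, exists e, g e = k) -> (group_size g j < #|U|)%N.
Proof.
move=> l_ge2 g_onto.
have /card_gt0P [k kj] : (0 < #|predC1 j|)%N by rewrite cardC1 card_ord; lia.
have [e gek] := g_onto k.
rewrite /group_size -cardsT; apply: proper_card; rewrite properT.
apply/negP => /eqP allj; have := in_setT e; rewrite -allj inE gek.
by rewrite inE in kj; rewrite (negbTE kj).
Qed.

Lemma proportional_rate_lt (n nj w wj : nat) :
  (0 < nj < n)%N -> (0 < w)%N -> (0 < wj)%N -> (wj * n = nj * w)%N ->
  (wj%:R)^-1 *+ nj.-1 < (w%:R)^-1 *+ n.-1 :> rat.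
Proof.
move=> /andP [nj0 njn] w0 wj0 wjn.
have cross : (nj.-1 * w < n.-1 * wj)%N by nia.
rewrite -(mulr_natr (wj%:R)^-1) -(mulr_natr (w%:R)^-1) ![_^-1 * _]mulrC.
rewrite ltr_pdivrMr ?ltr0n // mulrAC ltr_pdivlMr ?ltr0n // -!natrM ltr_nat.
exact: cross.
Qed.

Theorem mainTheorem2 (U : finType) (f : U -> nat) (l : nat) (g : U -> 'I_l)
  (w : nat) (wj : 'I_l -> nat)
  (hf : forall e, (0 < f e)%N)
  (hl : (2 <= l)%N)
  (hnonempty : forall j : 'I_l, exists e : U, g e = j)
  (hw : (0 < w)%N)
  (hwj_pos : forall j, (0 < wj j)%N)
  (hwj : forall j, (wj j * #|U| = group_size g j * w)%N) :
  total_loss f (FCM_hashes w g wj) < total_loss f (CM_hashes U w).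
Proof.
have [e0 _] := hnonempty (Ordinal (ltnW hl)).
have U_gt0 : (0 < #|U|)%N by apply/card_gt0P; exists e0.
rewrite !total_loss_coll_prob; apply: ltr_sum => [|e _].
  by apply/hasP; exists e0; rewrite ?mem_index_enum.
rewrite ltr_pM2l ?ltr0n ?hf // sum_coll_prob_FCM // sum_coll_prob_CM //.
apply: proportional_rate_lt => //.
by rewrite group_size_gt0 group_size_lt.
Qed.
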